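(* Let $n\ge 1$, $m\in\mathbb Z_+^n$, $c_\alpha\in\mathbb C$ for $0\le\alpha\le m$ (with $c_\alpha=0$ otherwise), $P(z)=\sum_{0\le\alpha\le m}c_\alpha z^\alpha$, $X_0=\{\tau\in\mathbb Z^n:\tau\ge0,\ \tau\not\ge m\}$, and $\varphi:X_0\to\mathbb C$, extended by zero to $\mathbb Z_+^n\setminus X_0$. Let $f:\mathbb Z_+^n\to\mathbb C$ satisfy $\sum_{0\le\alpha\le m}c_\alpha f(x+\alpha)=0$ for all $x\in\mathbb Z_+^n$ and $f=\varphi$ on $X_0$, and assume $F(z)=\sum_{x\ge0}f(x)/z^{x+I}$ converges in some neighborhood of infinity. Then in that neighborhood $$P(z)F(z)=\sum_J\sum_{\tau\in\Gamma_J}\Phi_{\tau,J}(z)\,P_\tau(z),\qquad\text{where } P_\tau(z)=\sum_{\alpha\le m,\ \alpha\not\le\tau}c_\alpha z^\alpha,$$ the outer sum running over all $J\in\{0,1\}^n$.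
   Context: Notation: $x\le y$ is componentwise; $x\not\ge y$ (resp. $x\not\le y$) means $x\ge y$ (resp. $x\le y$) fails; $I=(1,\dots,1)$; $z^x=\prod z_k^{x_k}$. $\Pi_m=\{x\in\mathbb Z^n:0\le x_k\le m_k\ \forall k\}$. For $J=(j_1,\dots,j_n)\in\{0,1\}^n$, $\Gamma_J=\{x\in\Pi_m: x_k=m_k \text{ if } j_k=1,\ x_k<m_k \text{ if } j_k=0\}$; these sets partition $\Pi_m$. For $y\in\mathbb Z_+^n$, $Jy=(j_1y_1,\dots,j_ny_n)$. For $\tau\in\Gamma_J$, $\Phi_{\tau,J}(z)=\sum_{x\in\tau+J\mathbb Z_+^n}\varphi(x)/z^{x+I}$, i.e. the sum of $\varphi(\tau+Jy)/z^{\tau+Jy+I}$ over the distinct points $\tau+Jy$, $y\in\mathbb Z_+^n$ (equivalently over $y\ge0$ with $y_k=0$ whenever $j_k=0$). *)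

From HB Require Import structures.
From mathcomp Require Import all_boot all_order all_algebra.
From mathcomp Require Import finmap.
From mathcomp Require Import complex.
From mathcomp Require Import boolp classical_sets fsbigop reals topology normedtype.

Set Implicit Arguments.
Unset Strict Implicit.
Unset Printing Implicit Defensive.
Import Order.TTheory GRing.Theory Num.Theory.
Import numFieldNormedType.Exports.
Local Open Scope classical_set_scope.
Local Open Scope ring_scope.

Notation mindex n := {ffun 'I_n -> nat}.

Section Defs.
Variable n : nat.

Definition mle (x y : mindex n) : Prop := forall k, (x k <= y k)%N.
Definition madd (x y : mindex n) : mindex n := [ffun k => (x k + y k)%N].
Definition msucc (x : mindex n) : mindex n := [ffun k => (x k).+1].
Definition mJ (J : {ffun 'I_n -> bool}) (y : mindex n) : mindex n :=
  [ffun k => if J k then y k else 0%N].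

Definition Pi (m : mindex n) : set (mindex n) := [set x | mle x m].
Definition X0 (m : mindex n) : set (mindex n) := [set x | ~ mle m x].
Definition Gamma (m : mindex n) (J : {ffun 'I_n -> bool}) : set (mindex n) :=
  [set x | mle x m /\ forall k, if J k then x k = m k else (x k < m k)%N].
Definition shifted (tau : mindex n) (J : {ffun 'I_n -> bool}) : set (mindex n) :=
  [set x | exists y : mindex n, x = madd tau (mJ J y)].

Definition zpow (C : ringType) (z : 'I_n -> C) (x : mindex n) : C :=
  \prod_(k < n) z k ^+ x k.
End Defs.

(* Summation of families indexed by a choiceType: limit of the net of finite
   partial sums (directed by inclusion of finite sets). *)
Section Summation.
Local Open Scope fset_scope.
Definition totally {I : choiceType} : set_system {fset I} :=
  filter_from setT (fun A => [set B | A `<=` B]).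

Definition partial_sum {I : choiceType} {V : zmodType}
  (a : I -> V) (A : {fset I}) : V := \sum_(i : A) a (val i).

Definition fsum {I : choiceType} {K : numFieldType} (a : I -> K) : K :=
  lim (partial_sum a @ totally).

Definition fsum_on {I : choiceType} {K : numFieldType} (S : set I) (a : I -> K) : K :=
  fsum (fun i => if `[< S i >] then a i else 0).

Definition abs_summable {I : choiceType} {K : numFieldType} (a : I -> K) : Prop :=
  exists M : K, forall A : {fset I}, partial_sum (fun i => `|a i|) A <= M.
End Summation.

Section Series.
Variables (R : realType) (n : nat).
Local Notation C := R[i].

Definition Fser (f : mindex n -> C) (z : 'I_n -> C) : C :=
  fsum (fun x : mindex n => f x / zpow z (msucc x)).

Definition Phi (phi : mindex n -> C) (tau : mindex n) (J : {ffun 'I_n -> bool})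
  (z : 'I_n -> C) : C :=
  fsum_on (shifted tau J) (fun x => phi x / zpow z (msucc x)).

Definition Ppoly (c : mindex n -> C) (m : mindex n) (z : 'I_n -> C) : C :=
  \sum_(a \in Pi m) c a * zpow z a.

Definition Ptau (c : mindex n -> C) (m tau : mindex n) (z : 'I_n -> C) : C :=
  \sum_(a \in [set a | mle a m /\ ~ mle a tau]) c a * zpow z a.
End Series.

(* Write g x = f x / z^(x+I).  For every x,
   P(z) = \sum_(a <= m, a <= x) c_a z^a + P_x(z).
   Summed against g, the first part gives
   \sum_(a <= m) c_a z^a \sum_w g (w + a) = \sum_w z^-(w+I) \sum_a c_a f (w + a),
   which vanishes by the recurrence.  In the second part P_x(z) = 0 unless x is
   in X_0, where g x = phi x / z^(x+I); and x lies in tau + J Z_+^n for exactly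
   one J and one tau in Gamma_J, namely J_k = [m_k <= x_k] and tau = min(x, m),
   for which P_tau = P_x.  Every rearrangement is licensed by the absolute
   convergence of F, all series being unordered sums dominated by |g|. *)

From HB Require Import structures.
From mathcomp Require Import all_boot all_order all_algebra.
From mathcomp Require Import finmap complex.
From mathcomp Require Import boolp classical_sets fsbigop reals topology normedtype.
From mathcomp Require Import cardinality.
Import Order.TTheory GRing.Theory Num.Theory.
Import numFieldNormedType.Exports.
Local Open Scope classical_set_scope.
Local Open Scope ring_scope.
Local Open Scope complex_scope.

Set Implicit Arguments.
Unset Strict Implicit.
Unset Printing Implicit Defensive.

Instance totally_filter {I : choiceType} : ProperFilter (@totally I).
Proof.
eapply filter_from_proper; last by move=> A _; exists A; rewrite /= fsubset_refl.
apply: filter_fromT_filter; first by exists fset0.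
by move=> A B /=; exists (A `|` B)%fset => P /=; rewrite fsubUset => /andP[].
Qed.

Section Summation.
Variables (I : choiceType) (K : numFieldType).
Implicit Types (a b : I -> K) (l : K) (A B : {fset I}).

Definition has_sum a l := partial_sum a @ totally --> l.

Lemma partial_sumE a A : partial_sum a A = \sum_(i <- A) a i.
Proof. by rewrite /partial_sum big_seq_fsetE. Qed.

Lemma eq_has_sum a b l : has_sum a l -> a =1 b -> has_sum b l.
Proof. by move=> ha /funext <-. Qed.

Lemma has_sum_fsum a l : has_sum a l -> fsum a = l.
Proof. exact: cvg_lim. Qed.

Lemma has_sum_unique a l1 l2 : has_sum a l1 -> has_sum a l2 -> l1 = l2.
Proof. by move=> h1 h2; rewrite -(has_sum_fsum h1) -(has_sum_fsum h2). Qed.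

Lemma has_sumP a l : has_sum a l <-> forall e : K, 0 < e ->
  exists A, forall B, (A `<=` B)%fset -> `|l - partial_sum a B| < e.
Proof.
split => [/cvgrPdist_lt H e /H [A _ HA]|H]; first by exists A => B /HA.
apply/cvgrPdist_lt => e /H [A HA]; exists A => // B; exact: HA.
Qed.

Lemma has_sum0 : has_sum (fun=> 0) 0.
Proof.
rewrite /has_sum (_ : partial_sum _ = fun=> 0); first exact: cvg_cst.
by apply/funext=> A; rewrite /partial_sum big1.
Qed.

Lemma has_sumD a b la lb :
  has_sum a la -> has_sum b lb -> has_sum (fun i => a i + b i) (la + lb).
Proof.
move=> ha hb; rewrite /has_sum (_ : partial_sum _ = partial_sum a \+ partial_sum b).
  exact: cvgD.
by apply/funext=> A; rewrite /partial_sum big_split.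
Qed.

Lemma has_sumN a l : has_sum a l -> has_sum (fun i => - a i) (- l).
Proof.
move=> ha; rewrite /has_sum (_ : partial_sum _ = fun A => - partial_sum a A).
  exact: cvgN.
by apply/funext=> A; rewrite /partial_sum sumrN.
Qed.

Lemma has_sumZl a l k : has_sum a l -> has_sum (fun i => k * a i) (k * l).
Proof.
move=> ha; rewrite /has_sum (_ : partial_sum _ = fun A => k * partial_sum a A).
  exact: cvgMr.
by apply/funext=> A; rewrite /partial_sum mulr_sumr.
Qed.

Lemma has_sumZr a l k : has_sum a l -> has_sum (fun i => a i * k) (l * k).
Proof.
by move=> /(has_sumZl (k := k)); rewrite mulrC; under eq_fun do rewrite mulrC.
Qed.

Lemma has_sum_sum (T : Type) (r : seq T) (F : T -> I -> K) (L : T -> K) :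
  (forall t, has_sum (F t) (L t)) ->
  has_sum (fun i => \sum_(t <- r) F t i) (\sum_(t <- r) L t).
Proof.
move=> HF; elim: r => [|t r IHr].
  by rewrite big_nil; under eq_fun do rewrite big_nil; exact: has_sum0.
by rewrite big_cons; under eq_fun do rewrite big_cons; exact: has_sumD.
Qed.

Lemma has_sum_fsbig (T : choiceType) (S : set T) (F : T -> I -> K) (L : T -> K) :
  finite_set S -> (forall t, has_sum (F t) (L t)) ->
  has_sum (fun i => \sum_(t \in S) F t i) (\sum_(t \in S) L t).
Proof.
move=> fS HF; rewrite fsbig_finite //; under eq_fun do rewrite fsbig_finite //.
exact: has_sum_sum.
Qed.

Lemma abs_summable_le a b : (forall i, `|a i| <= `|b i|) ->
  abs_summable b -> abs_summable a.
Proof.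
move=> le_ab [M HM]; exists M => B; apply: le_trans (HM B).
by rewrite !partial_sumE; apply: ler_sum.
Qed.

End Summation.

Section Reindex.
Variables (I J : choiceType) (K : numFieldType).

Lemma has_sum_reindex (e : J -> I) (d : I -> J) (P : pred I)
    (h : I -> K) l :
  cancel e d -> {in P, cancel d e} -> (forall y, P (e y)) ->
  (forall x, ~~ P x -> h x = 0) ->
  has_sum (h \o e) l -> has_sum h l.
Proof.
move=> eK dK Pe h0 /has_sumP H; apply/has_sumP => eps /H [A' HA'].
exists [fset e y | y in A']%fset => B AB.
set B' := [fset d x | x in [fset x in B | P x]]%fset.
have A'B' : (A' `<=` B')%fset.
  apply/fsubsetP => y yA; apply/imfsetP; exists (e y); rewrite ?eK //.
  by rewrite !inE Pe andbT (fsubsetP AB) ?in_imfset.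
suff -> : partial_sum h B = partial_sum (h \o e) B' by exact: HA'.
rewrite !partial_sumE big_imfset /=; last first.
  by move=> x1 x2; rewrite !inE => /andP[_ P1] /andP[_ P2] /(congr1 e); rewrite !dK.
rewrite -big_fset_condE [RHS]big_mkcond /=; apply: eq_bigr => x _.
by case: ifP => Px; [rewrite dK | rewrite h0 // Px].
Qed.

Lemma abs_summable_comp (e : J -> I) (a : I -> K) :
  injective e -> abs_summable a -> abs_summable (a \o e).
Proof.
move=> inj [M HM]; exists M => B; have := HM [fset e y | y in B]%fset.
by rewrite !partial_sumE big_imfset //= => x1 x2 _ _ /inj.
Qed.

End Reindex.

Section RealSummation.
Variables (R : realType) (I : choiceType).
Implicit Types (b : I -> R) (A B : {fset I}).

Lemma partial_sum_le_subset b A B : (forall i, 0 <= b i) ->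
  (A `<=` B)%fset -> partial_sum b A <= partial_sum b B.
Proof.
move=> b_ge0 AB; rewrite !partial_sumE (big_fsetID _ (mem A) B) /=.
have -> : \sum_(i <- [fset x in B | x \in A]%fset) b i = \sum_(i <- A) b i.
  apply: eq_fbigl => x; rewrite !inE /=; apply/andP/idP => [[]//|xA].
  by rewrite (fsubsetP AB).
by rewrite lerDl sumr_ge0.
Qed.

Lemma has_sum_sup b N : (forall i, 0 <= b i) ->
  (forall A, partial_sum b A <= N) -> has_sum b (sup (range (partial_sum b))).
Proof.
move=> b_ge0 bN; set S := range (partial_sum b).
have supS : has_sup S.
  by split; [exists (partial_sum b fset0), fset0 | exists N => _ [A _ <-]].
apply/has_sumP => e e_gt0; have [_ [A _ <-] HA] := sup_adherent e_gt0 supS.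
exists A => B AB; have le_sup : partial_sum b B <= sup S.
  by apply: sup_upper_bound => //; exists B.
rewrite ger0_norm ?subr_ge0 // ltrBlDr -ltrBlDl.
exact: lt_le_trans HA (partial_sum_le_subset b_ge0 AB).
Qed.

Lemma abs_bounded_has_sum b N : (forall A, partial_sum (fun i => `|b i|) A <= N) ->
  exists l, has_sum b l.
Proof.
move=> bN; have b_ge0 i : 0 <= b i + `|b i| by rewrite -lerBlDr sub0r; exact: lerNnormlW.
have bbN A : partial_sum (fun i => b i + `|b i|) A <= N + N.
  apply: le_trans (lerD (bN A) (bN A)); rewrite !partial_sumE -big_split /=.
  by apply: ler_sum => i _; rewrite lerD2r ler_norm.
rewrite (_ : b = fun i => (b i + `|b i|) + - `|b i|).
  by eexists; apply: has_sumD (has_sum_sup b_ge0 bbN)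
                              (has_sumN (has_sum_sup (fun i => normr_ge0 (b i)) bN)).
by apply/funext => i; rewrite addrK.
Qed.

Lemma has_sum_complex b l : has_sum b l -> has_sum (fun i => (b i)%:C) l%:C.
Proof.
move=> /has_sumP H; apply/has_sumP => e; rewrite ltcE => /andP[/eqP Im_e Re_e_gt0].
have -> : e = (complex.Re e)%:C by case: e Im_e {Re_e_gt0} => ? ? /= ->.
have [A HA] := H _ Re_e_gt0; exists A => B /HA.
rewrite (_ : partial_sum _ B = (partial_sum b B)%:C); last first.
  by rewrite !partial_sumE rmorph_sum.
by rewrite -rmorphB normc_def /= expr0n /= addr0 sqrtr_sqr ltcR.
Qed.

End RealSummation.

Section ComplexSummation.
Variables (R : realType) (I : choiceType).

Lemma Re_le_norm (x : R[i]) : `|complex.Re x| <= complex.Re `|x|.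
Proof. by have := normc_ge_Re x; rewrite lecE => /andP[]. Qed.

Lemma Im_le_norm (x : R[i]) : `|complex.Im x| <= complex.Re `|x|.
Proof.
have := Re_le_norm (x * 'i%C); rewrite ReiNIm normrN normrM.
by rewrite (_ : `|'i%C| = 1) ?mulr1 // normc_def /= expr0n expr1n add0r sqrtr1.
Qed.

Lemma abs_summable_has_sum (a : I -> R[i]) : abs_summable a -> has_sum a (fsum a).
Proof.
move=> [M HM].
have bounded (p : R[i] -> R) : (forall x, `|p x| <= complex.Re `|x|) ->
    forall A, partial_sum (fun i => `|p (a i)|) A <= complex.Re M.
  move=> le_p A; have := HM A; rewrite lecE => /andP[_]; apply: le_trans.
  by rewrite !partial_sumE raddf_sum; apply: ler_sum => i _; apply: le_p.
have [lRe /has_sum_complex hRe] := abs_bounded_has_sum (bounded _ (@Re_le_norm)).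
have [lIm /has_sum_complex/(has_sumZl (k := 'i%C)) hIm] :=
  abs_bounded_has_sum (bounded _ (@Im_le_norm)).
have := has_sumD hRe hIm; under eq_fun do rewrite -complexE.
by move=> ha; rewrite (has_sum_fsum ha).
Qed.

End ComplexSummation.

Section MultiIndex.
Variables (n : nat) (m : mindex n).
Implicit Types (x w a tau : mindex n) (J : {ffun 'I_n -> bool}).

Lemma finite_Pi : finite_set (Pi m).
Proof.
set N := \max_(k < n) m k.
pose embed (t : {ffun 'I_n -> 'I_N.+1}) : mindex n := [ffun k => val (t k)].
apply: (@sub_finite_set _ _ (embed @` setT)).
  move=> x le_xm; exists [ffun k => inord (x k)] => //.
  apply/ffunP => k; rewrite /embed !ffunE /= inordK // ltnS.
  exact: leq_trans (le_xm k) (leq_bigmax k).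
exact/finite_image/finite_finset.
Qed.

Lemma finite_Gamma J : finite_set (Gamma m J).
Proof. by apply: sub_finite_set finite_Pi => x []. Qed.

Lemma madd_inj a : injective (fun w => madd w a).
Proof.
move=> w1 w2 /ffunP E; apply/ffunP => k.
by have := E k; rewrite !ffunE; apply: addIn.
Qed.

Definition gamma_index x : {ffun 'I_n -> bool} := [ffun k => (m k <= x k)%N].
Definition gamma_base x : mindex n := [ffun k => minn (x k) (m k)].

Lemma Gamma_gamma_base x : Gamma m (gamma_index x) (gamma_base x).
Proof.
split=> k; rewrite !ffunE ?geq_minr //.
by case: (leqP (m k) (x k)) => [/minn_idPr | lt_xm]; rewrite ?(minn_idPl (ltnW lt_xm)).
Qed.

Lemma shifted_gamma_base x : shifted (gamma_base x) (gamma_index x) x.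
Proof.
exists [ffun k => (x k - m k)%N]; apply/ffunP => k; rewrite !ffunE.
by case: (leqP (m k) (x k)) => [le_mx|]; rewrite ?addn0 ?subnKC.
Qed.

Lemma shifted_Gamma_uniq J tau x : Gamma m J tau -> shifted tau J x ->
  J = gamma_index x /\ tau = gamma_base x.
Proof.
move=> [_ G_tau] [y ->]; split; apply/ffunP=> k; rewrite !ffunE; have := G_tau k;
  case: (J k) => [->|lt_tm].
- by rewrite leq_addr.
- by rewrite addn0 leqNgt lt_tm.
- by apply/esym/minn_idPr; apply: leq_addr.
- by rewrite addn0; apply/esym/minn_idPl; apply: ltnW.
Qed.

Lemma sum_Gamma_shifted (V : zmodType) (u : mindex n -> {ffun 'I_n -> bool} -> V) x :
  \sum_J \sum_(tau \in Gamma m J) (if `[< shifted tau J x >] then u tau J else 0)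
  = u (gamma_base x) (gamma_index x).
Proof.
rewrite (bigD1 (gamma_index x)) //= [X in _ + X]big1 ?addr0 => [|J J_neq]; last first.
  apply: fsbig1 => tau G_tau; case: asboolP => // /(shifted_Gamma_uniq G_tau)[J_eq _].
  by rewrite J_eq eqxx in J_neq.
rewrite (fsbigD1 (gamma_base x) _ _ (finite_Gamma _) (Gamma_gamma_base x)) /= fsbig1 ?addr0.
  by case: asboolP => // /(_ (shifted_gamma_base x)).
move=> tau [G_tau tau_neq]; case: asboolP => // /(shifted_Gamma_uniq G_tau)[_ tau_eq].
by case: tau_neq.
Qed.

End MultiIndex.

Lemma zpow_msucc_madd (F : comRingType) n (z : 'I_n -> F) (w a : mindex n) :
  zpow z (msucc (madd w a)) = zpow z a * zpow z (msucc w).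
Proof.
rewrite /zpow -big_split /=; apply: eq_bigr => k _.
by rewrite !ffunE -exprD addnS addnC.
Qed.

Lemma zpow_neq0 (F : idomainType) n (z : 'I_n -> F) (x : mindex n) :
  (forall k, z k != 0) -> zpow z x != 0.
Proof. by move=> z_neq0; apply/prodf_neq0 => k _; apply: expf_neq0. Qed.

Section Polynomials.
Variables (R : realType) (n : nat) (m : mindex n) (c : mindex n -> R[i]) (z : 'I_n -> R[i]).
Implicit Types x : mindex n.

Lemma Ppoly_split x : Ppoly c m z =
  \sum_(a \in Pi m) (if `[< mle a x >] then c a * zpow z a else 0) + Ptau c m x z.
Proof.
rewrite /Ppoly (fsbigID [set a | mle a x] (Pi m)); last exact: finite_Pi.
by rewrite fsbig_mkcondr; congr (_ + _); apply: eq_fsbigr.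
Qed.

Lemma Ptau_gamma_base x : Ptau c m (gamma_base m x) z = Ptau c m x z.
Proof.
rewrite /Ptau (_ : [set a | _ /\ ~ mle a _] = [set a | mle a m /\ ~ mle a x]) //.
apply/seteqP; split => a /= [le_am not_le_a]; split => //; apply: contra_not not_le_a.
  by move=> le_ax k; rewrite ffunE leq_min le_ax le_am.
by move=> le_a k; apply: leq_trans (le_a k) _; rewrite ffunE geq_minl.
Qed.

Lemma Ptau_notX0 x : ~ X0 m x -> Ptau c m x z = 0.
Proof.
move=> /contrapT le_mx; apply: fsbig1 => a [le_am []] k.
exact: leq_trans (le_am k) (le_mx k).
Qed.

End Polynomials.

Definition laurent_term (R : realType) n (f : mindex n -> R[i]) (z : 'I_n -> R[i])
  (x : mindex n) : R[i] := f x / zpow z (msucc x).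

Section Identity.
Variables (R : realType) (n : nat) (m : mindex n).
Variables (c phi f : mindex n -> R[i]) (z : 'I_n -> R[i]).
Hypothesis hphi : forall x, ~ X0 m x -> phi x = 0.
Hypothesis hrec : forall x, \sum_(a \in Pi m) c a * f (madd x a) = 0.
Hypothesis hinit : forall x, X0 m x -> f x = phi x.
Hypothesis z_neq0 : forall k, z k != 0.
Hypothesis f_summable : abs_summable (laurent_term f z).
Implicit Types x w a : mindex n.

Let g := laurent_term f z.
Let shift_sum a := fsum (fun w => g (madd w a)).

Lemma has_sum_shift a :
  has_sum (fun w => c a * zpow z a * g (madd w a)) (c a * zpow z a * shift_sum a).
Proof.
apply/has_sumZl/abs_summable_has_sum.
exact: abs_summable_comp (@madd_inj _ a) f_summable.
Qed.

Lemma has_sum_recurrence_term a : has_sum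
  (fun x => (if `[< mle a x >] then c a * zpow z a else 0) * g x)
  (c a * zpow z a * shift_sum a).
Proof.
apply: (has_sum_reindex (e := fun w => madd w a) (d := fun x => [ffun k => (x k - a k)%N])
  (P := fun x => `[< mle a x >])) => [w|x /asboolP le_ax|w|x /negbTE->|].
- by apply/ffunP => k; rewrite !ffunE addnK.
- by apply/ffunP => k; rewrite !ffunE subnK.
- by apply/asboolP => k; rewrite ffunE leq_addl.
- by rewrite mul0r.
apply: (eq_has_sum (has_sum_shift (a := a))) => w /=.
by rewrite ifT //; apply/asboolP => k; rewrite ffunE leq_addl.
Qed.

Lemma sum_shift_sum_eq0 : \sum_(a \in Pi m) c a * zpow z a * shift_sum a = 0.
Proof.
have vanish w : \sum_(a \in Pi m) c a * zpow z a * g (madd w a) = 0.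
  transitivity ((\sum_(a \in Pi m) c a * f (madd w a)) / zpow z (msucc w)).
    rewrite mulr_fsuml; apply: eq_fsbigr => a _.
    rewrite /g /laurent_term zpow_msucc_madd invfM -!mulrA; congr (_ * _).
    by rewrite mulrCA mulVKf ?zpow_neq0.
  by rewrite hrec mul0r.
apply: has_sum_unique (has_sum_fsbig (finite_Pi m) has_sum_shift) _.
by under eq_fun do rewrite vanish; exact: has_sum0.
Qed.

Lemma has_sum_recurrence_part :
  has_sum (fun x => \sum_(a \in Pi m) (if `[< mle a x >] then c a * zpow z a else 0) * g x) 0.
Proof.
by have := has_sum_fsbig (finite_Pi m) has_sum_recurrence_term; rewrite sum_shift_sum_eq0.
Qed.

Lemma has_sum_Phi tau J :
  has_sum (fun x => if `[< shifted tau J x >] then laurent_term phi z x else 0) (Phi phi tau J z).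
Proof.
apply: abs_summable_has_sum; apply: abs_summable_le f_summable => x.
case: asboolP => _; last by rewrite normr0 normr_ge0.
rewrite /laurent_term; case: (pselect (X0 m x)) => [/hinit-> //|/hphi->].
by rewrite mul0r normr0 normr_ge0.
Qed.

Lemma has_sum_initial_part : has_sum (fun x => Ptau c m x z * g x)
  (\sum_(J : {ffun 'I_n -> bool}) \sum_(tau \in Gamma m J) Phi phi tau J z * Ptau c m tau z).
Proof.
apply: (eq_has_sum (has_sum_sum (r := index_enum _) (fun J => has_sum_fsbig (finite_Gamma m J)
  (fun tau => has_sumZr (k := Ptau c m tau z) (has_sum_Phi (tau := tau) (J := J)))))) => x /=.
under eq_bigr do under eq_fsbigr do rewrite (fun_if (fun t => t * _)) mul0r.
rewrite sum_Gamma_shifted Ptau_gamma_base /g /laurent_term mulrC.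
by case: (pselect (X0 m x)) => [/hinit-> //|/Ptau_notX0->]; rewrite !mul0r.
Qed.

Lemma has_sum_Ppoly_mul : has_sum (fun x => Ppoly c m z * g x)
  (\sum_(J : {ffun 'I_n -> bool}) \sum_(tau \in Gamma m J) Phi phi tau J z * Ptau c m tau z).
Proof.
have := has_sumD has_sum_recurrence_part has_sum_initial_part; rewrite add0r => split_sum.
by apply: (eq_has_sum split_sum) => x; rewrite (Ppoly_split _ _ _ x) mulrDl -mulr_fsuml.
Qed.

End Identity.

Theorem theorem2 (R : realType) (n : nat) (hn : (0 < n)%N) (m : mindex n)
  (c : mindex n -> R[i]) (hc : forall a, ~ mle a m -> c a = 0)
  (phi : mindex n -> R[i]) (hphi : forall x, ~ X0 m x -> phi x = 0)
  (f : mindex n -> R[i])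
  (hrec : forall x : mindex n, \sum_(a \in Pi m) c a * f (madd x a) = 0)
  (hinit : forall x, X0 m x -> f x = phi x)
  (rho : R) (hrho : 0 <= rho)
  (hconv : forall z : 'I_n -> R[i], (forall k, (rho%:C)%C < `|z k|) ->
     abs_summable (fun x : mindex n => f x / zpow z (msucc x))) :
  forall z : 'I_n -> R[i], (forall k, (rho%:C)%C < `|z k|) ->
    Ppoly c m z * Fser f z =
    \sum_(J : {ffun 'I_n -> bool})
       \sum_(tau \in Gamma m J) Phi phi tau J z * Ptau c m tau z.
Proof.
move=> z hz; have z_neq0 k : z k != 0.
  by rewrite -normr_gt0 (le_lt_trans _ (hz k)) ?ler0c.
have f_summable := hconv z hz.
apply: has_sum_unique (has_sumZl (k := Ppoly c m z) (abs_summable_has_sum f_summable)) _.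
exact: has_sum_Ppoly_mul hphi hrec hinit z_neq0 f_summable.
Qed.
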